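(* The monoid $\mathrm{Mon}(R)$ is a BF-monoid. Moreover: (1) $\mathrm{Mon}(R)$ is neither locally finitely generated nor transfer Krull; (2) $\mathcal U_k(\mathrm{Mon}(R))=\mathbb N_{\ge2}$ for all $k\ge2$; (3) $\mathsf L_{\mathrm{Mon}(R)}(\mathfrak a_k)=[2,k]$ for all $k\ge2$, where $\mathfrak a_k=\langle X,Y\rangle^k$; (4) $\mathrm{Mon}(R)$ is fully elastic.
   Context: Let $K$ be a field, $N\ge2$, $R=K[X_1,\dots,X_N]$, $X=X_1$, $Y=X_2$. $\mathrm{Mon}(R)$ is the monoid of nonzero monomial ideals of $R$ under ideal multiplication, with identity $R$ (its only unit). An atom of $\mathrm{Mon}(R)$ is an $I\ne R$ in $\mathrm{Mon}(R)$ not a product of two elements of $\mathrm{Mon}(R)\setminus\{R\}$. For a monoid $H$ (commutative, unit-cancellative) and $a\in H$, $\mathsf L_H(a)$ is the set of $k$ such that $a$ is a product of $k$ atoms, and $\mathcal L(H)=\{\mathsf L_H(a):a\in H\}$. $H$ is a BF-monoid if every $\mathsf L_H(a)$ is finite and nonempty. $\mathcal U_k(H)=\bigcup\{L\in\mathcal L(H):k\in L\}$. $H$ is locally finitely generated if for every $a\in H$ the smallest divisor-closed submonoid of $H$ containing $a$ is finitely generated up to units. A Krull monoid is a commutative cancellative monoid satisfying the ascending chain condition on divisorial ideals and completely integrally closed; a monoid homomorphism $\theta:H\to K'$ is a transfer homomorphism if $K'=\theta(H)K'^\times$, $\theta^{-1}(K'^\times)=H^\times$, and whenever $\theta(a)=\beta\gamma$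 there are $b,c\in H$ with $a=bc$, $\theta(b)\in\beta K'^\times$, $\theta(c)\in\gamma K'^\times$; $H$ is transfer Krull if there is a transfer homomorphism from $H$ to a Krull monoid. For a finite nonempty $L\subseteq\mathbb N$, $\rho(L)=\max L/\min L$ (with $\rho(\{0\})=1$), and $\rho(H)=\sup\{\rho(L):L\in\mathcal L(H)\}$; $H$ is fully elastic if for every rational $q$ with $1<q<\rho(H)$ there is $L\in\mathcal L(H)$ with $\rho(L)=q$. $[x,y]=\{z\in\mathbb Z:x\le z\le y\}$. *)

From HB Require Import structures.
From mathcomp Require Import all_boot all_order all_algebra.
From mathcomp Require Import mpoly.
From Stdlib Require Import ClassicalEpsilon.

Set Implicit Arguments.
Unset Strict Implicit.
Unset Printing Implicit Defensive.

Import GRing.Theory.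
Local Open Scope ring_scope.

Definition is_unit (T : Type) (op : T -> T -> T) (e : T) (u : T) : Prop :=
  exists v, op u v = e.

Definition mdvd (T : Type) (op : T -> T -> T) (b a : T) : Prop :=
  exists c, a = op b c.

Definition mpow (T : Type) (op : T -> T -> T) (e : T) (a : T) (n : nat) : T :=
  iter n (op a) e.

Definition mprod (T : Type) (op : T -> T -> T) (e : T) (s : seq T) : T :=
  foldr op e s.

Definition is_atom (T : Type) (op : T -> T -> T) (e : T) (a : T) : Prop :=
  ~ is_unit op e a /\
  forall b c, a = op b c -> is_unit op e b \/ is_unit op e c.

Definition Lset (T : Type) (op : T -> T -> T) (e : T) (a : T) (k : nat) : Prop :=
  exists s : seq T, size s = k /\ (forall x, List.In x s -> is_atom op e x) /\
                    a = mprod op e s.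

Definition BF_monoid (T : Type) (op : T -> T -> T) (e : T) : Prop :=
  forall a, (exists k, Lset op e a k) /\ (exists n, forall k, Lset op e a k -> k <= n)%N.

(* U_k(H) = union of all L in L(H) with k in L *)
Definition Uset (T : Type) (op : T -> T -> T) (e : T) (k m : nat) : Prop :=
  exists a, Lset op e a k /\ Lset op e a m.

Definition rho_of (mn mx : nat) : rat :=
  if mn == 0%N then 1 else (mx%:R / mn%:R).

Definition rhoL (T : Type) (op : T -> T -> T) (e : T) (a : T) (q : rat) : Prop :=
  exists mn mx : nat,
    Lset op e a mn /\ (forall k, Lset op e a k -> mn <= k)%N /\
    Lset op e a mx /\ (forall k, Lset op e a k -> k <= mx)%N /\
    q = rho_of mn mx.

(* q < rho(H) = sup { rho(L) : L in L(H) }  iff  some rho(L) exceeds q *)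
Definition lt_rhoH (T : Type) (op : T -> T -> T) (e : T) (q : rat) : Prop :=
  exists a r, rhoL op e a r /\ q < r.

Definition fully_elastic (T : Type) (op : T -> T -> T) (e : T) : Prop :=
  forall q : rat, 1 < q -> lt_rhoH op e q -> exists a, rhoL op e a q.

Definition is_submonoid (T : Type) (op : T -> T -> T) (e : T) (S : T -> Prop) : Prop :=
  S e /\ forall a b, S a -> S b -> S (op a b).

Definition divisor_closed (T : Type) (op : T -> T -> T) (S : T -> Prop) : Prop :=
  forall a b c, S a -> a = op b c -> S b.

Definition dc_gen (T : Type) (op : T -> T -> T) (e : T) (a : T) (x : T) : Prop :=
  forall S, is_submonoid op e S -> divisor_closed op S -> S a -> S x.

Definition fin_gen_up_to_units (T : Type) (op : T -> T -> T) (e : T)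
    (S : T -> Prop) : Prop :=
  exists E : seq T, (forall x, List.In x E -> S x) /\
    forall s, S s -> exists u (l : seq T),
      S u /\ (exists v, S v /\ op u v = e) /\
      (forall x, List.In x l -> List.In x E) /\ s = op u (mprod op e l).

Definition loc_fin_gen (T : Type) (op : T -> T -> T) (e : T) : Prop :=
  forall a, fin_gen_up_to_units op e (dc_gen op e a).

Definition is_cmonoid (T : Type) (op : T -> T -> T) (e : T) : Prop :=
  (forall a b c, op a (op b c) = op (op a b) c) /\
  (forall a b, op a b = op b a) /\ (forall a, op e a = a).

Definition cancellative (T : Type) (op : T -> T -> T) : Prop :=
  forall a b c, op a b = op a c -> b = c.

(* Elements of the quotient group q(H) are written a/b with a, b in H.
   For X subset of H:  (H : X) = { a/b : b | a y for all y in X },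
   and  X_v = (H : (H : X)), so z in X_v iff  b | a z  for all a/b in (H : X). *)
Definition vclos (T : Type) (op : T -> T -> T) (X : T -> Prop) (z : T) : Prop :=
  forall a b, (forall y, X y -> mdvd op b (op a y)) -> mdvd op b (op a z).

Definition divisorial (T : Type) (op : T -> T -> T) (A : T -> Prop) : Prop :=
  forall z, A z <-> vclos op A z.

Definition ACC_divisorial (T : Type) (op : T -> T -> T) : Prop :=
  forall A : nat -> T -> Prop,
    (forall n, divisorial op (A n)) ->
    (forall n z, A n z -> A n.+1 z) ->
    exists n, forall m, (n <= m)%N -> forall z, A m z <-> A n z.

(* completely integrally closed: every x = a/b in q(H) which is almost
   integral (c x^n in H for all n, some c in H) lies in H *)
Definition compl_int_closed (T : Type) (op : T -> T -> T) (e : T) : Prop :=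
  forall a b c, (forall n, mdvd op (mpow op e b n) (op c (mpow op e a n))) ->
                mdvd op b a.

Definition is_Krull (T : Type) (op : T -> T -> T) (e : T) : Prop :=
  is_cmonoid op e /\ cancellative op /\ ACC_divisorial op /\ compl_int_closed op e.

Definition is_transfer_hom (T : Type) (op : T -> T -> T) (e : T)
    (T' : Type) (op' : T' -> T' -> T') (e' : T') (th : T -> T') : Prop :=
  th e = e' /\ (forall a b, th (op a b) = op' (th a) (th b)) /\
  (forall y, exists a u, is_unit op' e' u /\ y = op' (th a) u) /\
  (forall a, is_unit op' e' (th a) <-> is_unit op e a) /\
  (forall a beta gamma, th a = op' beta gamma ->
     exists b c, a = op b c /\
       (exists u, is_unit op' e' u /\ th b = op' beta u) /\
       (exists u, is_unit op' e' u /\ th c = op' gamma u)).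

Definition transfer_Krull (T : Type) (op : T -> T -> T) (e : T) : Prop :=
  exists (T' : Type) (op' : T' -> T' -> T') (e' : T') (th : T -> T'),
    is_Krull op' e' /\ is_transfer_hom op e op' e' th.

Section MonR.
Variables (K : fieldType) (N : nat).

Definition is_ideal (I : {mpoly K[N]} -> Prop) : Prop :=
  I 0 /\ (forall p q, I p -> I q -> I (p + q)) /\ (forall r p, I p -> I (r * p)).

Definition ideal_gen (S : {mpoly K[N]} -> Prop) (p : {mpoly K[N]}) : Prop :=
  forall I, is_ideal I -> (forall q, S q -> I q) -> I p.

Definition is_monomial (p : {mpoly K[N]}) : Prop :=
  exists m : 'X_{1..N}, p = 'X_[m].

Definition monomial_ideal (I : {mpoly K[N]} -> Prop) : Prop :=
  exists S, (forall q, S q -> is_monomial q) /\ forall p, I p <-> ideal_gen S p.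

Definition nonzero_ideal (I : {mpoly K[N]} -> Prop) : Prop :=
  exists p, I p /\ p != 0.

Definition is_MonR (I : {mpoly K[N]} -> Prop) : Prop :=
  monomial_ideal I /\ nonzero_ideal I.

Definition MonR : Type := {I : {mpoly K[N]} -> Prop | is_MonR I}.

Lemma is_MonR_full : is_MonR (fun _ => True).
Proof.
split; last by exists 1; split=> //; exact: oner_neq0.
exists (fun q => q = 'X_[0%MM]); split; first by move=> q ->; exists 0%MM.
move=> p; split=> // _ I [_ [_ HI]] HS.
have H1 := HS _ erefl; rewrite mpolyX0 in H1.
by rewrite -(mulr1 p); apply: HI.
Qed.

Definition mon_one : MonR := exist _ (fun _ => True) is_MonR_full.

(* an ideal, viewed as an element of Mon(R); for ideals that are nonzero
   monomial ideals (the only case used) this is the ideal itself *)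
Definition to_mon (I : {mpoly K[N]} -> Prop) : MonR :=
  match excluded_middle_informative (is_MonR I) with
  | left h => exist _ I h
  | right _ => mon_one
  end.

Definition ideal_mul (I J : {mpoly K[N]} -> Prop) : {mpoly K[N]} -> Prop :=
  ideal_gen (fun p => exists f g, I f /\ J g /\ p = f * g).

Definition mon_mul (A B : MonR) : MonR := to_mon (ideal_mul (sval A) (sval B)).

(* the ideal <X, Y> = <X_1, X_2> (variables indexed 0 and 1 here) *)
Definition ideal_XY : MonR :=
  to_mon (ideal_gen (fun p => exists i : 'I_N, (val i < 2)%N /\ p = 'X_i)).

Definition a_k (k : nat) : MonR := mpow mon_mul mon_one ideal_XY k.

End MonR.

(* A nonzero monomial ideal is determined by the set of exponents of the
   monomials it contains, an up-set of N^N, and ideal multiplication becomes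
   Minkowski sum of these sets.  Hence Mon(R) is a reduced commutative monoid in
   which the least degree of an exponent is additive and positive on non-units;
   it bounds factorization lengths, which gives the BF property.  All other
   claims are witnessed inside K[X, Y], with M_k = <X, Y>^k, A_n = <X^n, Y^n>,
   an atom D_d such that M_1 D_d = M_(d+1), and the atom <X>:
   - A_(n+1) M_n = M_(2n+1), so infinitely many atoms divide powers of M_1, and
     M_1 A_2 = M_1^3 cancels the atom A_2 against a product of two non-units,
     which a transfer homomorphism to a Krull monoid forbids;
   - M_k = M_1 D_(k-m+1) M_1^(m-2) realizes every length m in [2, k];
   - <X> occurs in every factorization of X^j M_k and can be cancelled, so
     L(X^j M_k) = [j + 2, j + k], and these elasticities exhaust the rationals
     greater than 1. *)

From mathcomp Require Import all_boot all_order all_algebra.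
From mathcomp Require Import mpoly zify.
From Stdlib Require Import ClassicalEpsilon Classical FunctionalExtensionality.
From Stdlib Require Import PropExtensionality ProofIrrelevance.

Set Implicit Arguments.
Unset Strict Implicit.
Unset Printing Implicit Defensive.

Import GRing.Theory Num.Theory Order.POrderTheory.

Definition reduced_cmonoid (T : Type) (op : T -> T -> T) (e : T) : Prop :=
  is_cmonoid op e /\ forall u, is_unit op e u -> u = e.

Section ReducedMonoid.
Variables (T : Type) (op : T -> T -> T) (e : T).
Hypothesis Hred : reduced_cmonoid op e.

Local Notation prod := (mprod op e).
Local Notation unit := (is_unit op e).
Local Notation atom := (is_atom op e).

Lemma mprod_cat s1 s2 : prod (s1 ++ s2) = op (prod s1) (prod s2).
Proof.
have [[opA [_ op1]] _] := Hred.
by elim: s1 => [|x s IH] /=; rewrite ?op1 // IH opA.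
Qed.

Lemma mprod_insert s1 x s2 : prod (s1 ++ x :: s2) = op x (prod (s1 ++ s2)).
Proof.
have [[opA [opC _]] _] := Hred.
by rewrite !mprod_cat /= opA [op (prod s1) x]opC -opA.
Qed.

Lemma mprod_nseq n a : prod (nseq n a) = mpow op e a n.
Proof. by elim: n => //= n ->. Qed.

Lemma iter_op_mpow n a b : iter n (op a) b = op (mpow op e a n) b.
Proof.
have [[opA [_ op1]] _] := Hred.
by elim: n => [|n IH]; rewrite ?op1 // /mpow !iterS -/(mpow op e a n) IH opA.
Qed.

Lemma In_cat (x : T) s1 s2 : List.In x (s1 ++ s2) <-> List.In x s1 \/ List.In x s2.
Proof. exact: List.in_app_iff. Qed.

Lemma In_nseq n (x y : T) : List.In x (nseq n y) -> x = y.
Proof. by elim: n => [|n IH] //= [-> | /IH]. Qed.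

Lemma atom_neq1 a : atom a -> a <> e.
Proof.
have [[_ [_ op1]] _] := Hred.
by move=> [nu _] a1; apply: nu; exists e; rewrite a1 op1.
Qed.

Lemma mprod_atoms_neq1 x s :
  (forall y, List.In y (x :: s) -> atom y) -> prod (x :: s) <> e.
Proof.
have [_ unit1] := Hred.
move=> hs /= xs1; apply: (atom_neq1 (hs x (or_introl erefl))).
by apply: unit1; exists (prod s).
Qed.

Lemma atomI a : ~ unit a ->
  (forall b c, a = op b c -> ~ unit b -> ~ unit c -> False) -> atom a.
Proof.
move=> nu nsplit; split => // b c abc.
by apply: NNPP => /not_or_and [nub nuc]; exact: nsplit abc nub nuc.
Qed.

Lemma not_atom_split a : ~ unit a -> ~ atom a ->
  exists b c, [/\ a = op b c, ~ unit b & ~ unit c].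
Proof.
move=> nu na; apply: NNPP => nsplit; apply: na; apply: atomI => // b c abc nub nuc.
by apply: nsplit; exists b, c.
Qed.

(* A product of two or more atoms is neither 1 nor an atom. *)
Lemma Lset_ge2 a k m : Lset op e a k -> (2 <= k)%N -> Lset op e a m -> (2 <= m)%N.
Proof.
have [[_ [opC op1]] unit1] := Hred.
move=> [[|x [|y s]] [<- [hs ->]]] // _ [[|z [|w t]] [<- [ht E]]] //=.
  by case: (mprod_atoms_neq1 hs E).
have [_ hz] := ht z (or_introl erefl).
move: E; rewrite /= [op z e]opC op1 => E.
have hys : forall u, List.In u (y :: s) -> atom u by move=> u hu; apply: hs; right.
case: (hz _ _ (esym E)) => /unit1; first by case/(atom_neq1 (hs x (or_introl erefl))).
by case/(mprod_atoms_neq1 hys).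
Qed.

Lemma atom_in_mprod x s : atom x -> x = prod s -> List.In x s.
Proof.
have [[_ [opC op1]] unit1] := Hred.
move=> ax; elim: s => [|y s IH] /= E; first exact: atom_neq1 ax E.
case: (ax.2 _ _ E) => /unit1 h; first by right; apply: IH; rewrite E h op1.
by left; rewrite E h opC op1.
Qed.

Lemma no_injection_into_list (E : list T) (f : nat -> T) :
  injective f -> ~ (forall n, List.In (f n) E).
Proof.
elim: E f => [|x E IH] f finj fE; first exact: fE 0%N.
have [[n0 fn0]|nx] := classic (exists n0, f n0 = x); last first.
  by apply: (IH f) => // n; case: (fE n) => // fnx; case: nx; exists n.
pose g n := f (if (n < n0)%N then n else n.+1).
apply: (IH g) => [a b /finj|n]; first by rewrite /g; case: ifP; case: ifP; lia.
case: (fE (if (n < n0)%N then n else n.+1)) => // fn.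
by have := finj _ _ (etrans fn0 fn); case: ifP; lia.
Qed.

Lemma infinitely_many_atoms_not_fin_gen (S : T -> Prop) (f : nat -> T) :
  injective f -> (forall n, S (f n) /\ atom (f n)) ->
  ~ fin_gen_up_to_units op e S.
Proof.
have [[_ [_ op1]] unit1] := Hred.
move=> finj hf [E [_ genE]]; apply: (no_injection_into_list finj) => n.
have [Sfn afn] := hf n.
have [u [l [_ [[v [_ uv]] [lE fnE]]]]] := genE _ Sfn.
apply: lE; apply: atom_in_mprod afn _.
by rewrite fnE (unit1 u) ?op1 //; exists v.
Qed.

End ReducedMonoid.

Lemma dc_gen_dvd_pow (T : Type) (op : T -> T -> T) (e a x : T) n :
  mdvd op x (mpow op e a n) -> dc_gen op e a x.
Proof.
move=> [c ac] S [S1 SM] Sdc Sa; apply: (Sdc _ _ c _ ac).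
by rewrite /mpow {ac}; elim: n => //= n IH; exact: SM.
Qed.

(* Lifting th u = th v * th w through the transfer homomorphism splits the
   atom u into factors associated to v and w. *)
Lemma transfer_Krull_atom_cancel (T : Type) (op : T -> T -> T) (e : T) :
  transfer_Krull op e -> forall a u v w, op a u = op a (op v w) -> is_atom op e u ->
  is_unit op e v \/ is_unit op e w.
Proof.
move=> [T' [op' [e' [th [[[opA _] [canc _]] [_ [thM [_ [thU lift]]]]]]]]] a u v w E [_ hu].
have : th u = op' (th v) (th w) by apply: (canc (th a)); rewrite -!thM E.
case/lift=> b [c [uE [[x [_ bE]] [y [_ cE]]]]].
have unit_th z t : is_unit op' e' (op' (th z) t) -> is_unit op e z.
  by move=> [s hs]; apply/thU; exists (op' t s); rewrite opA.
case: (hu _ _ uE) => /thU; rewrite ?bE ?cE => /unit_th; by [left | right].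
Qed.

Section MonomialIdeals.
Variables (K : fieldType) (N : nat).
Local Open Scope ring_scope.
Local Notation poly := {mpoly K[N]}.
Local Notation mon := 'X_{1..N}.
Local Notation M := (MonR K N).
Local Notation one := (mon_one K N).
Local Notation mul := (@mon_mul K N).

Lemma ideal_gen_is_ideal (S : poly -> Prop) : is_ideal (ideal_gen S).
Proof.
split; first by move=> I [].
split=> [p q hp hq | r p hp] I HI SI; have [_ [ID IM]] := HI.
- by apply: ID; [exact: hp | exact: hq].
- by apply: IM; exact: hp.
Qed.

Lemma ideal_gen_sub (S : poly -> Prop) q : S q -> ideal_gen S q.
Proof. by move=> Sq I _; apply. Qed.

Lemma ideal_gen_mono (S1 S2 : poly -> Prop) :
  (forall q, S1 q -> ideal_gen S2 q) -> forall p, ideal_gen S1 p -> ideal_gen S2 p.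
Proof. by move=> S12 p; apply; [exact: ideal_gen_is_ideal | exact: S12]. Qed.

Lemma ideal_big_sum (I : poly -> Prop) (A : eqType) (r : seq A) (F : A -> poly) :
  is_ideal I -> (forall x, x \in r -> I (F x)) -> I (\sum_(x <- r) F x).
Proof.
move=> [I0 [ID _]]; elim: r => [|x r IH] Ir; first by rewrite big_nil.
rewrite big_cons; apply: ID; first by apply: Ir; rewrite mem_head.
by apply: IH => y yr; apply: Ir; rewrite in_cons yr orbT.
Qed.

Definition monomials (S : mon -> Prop) (q : poly) : Prop := exists2 s, S s & q = 'X_[s].

Definition upclosure (S : mon -> Prop) (m : mon) : Prop := exists2 s, S s & (s <= m)%MM.

Lemma ideal_gen_monomialsP (S : mon -> Prop) p :
  ideal_gen (monomials S) p <-> forall m, m \in msupp p -> upclosure S m.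
Proof.
split.
- move/(_ (fun q => forall m, m \in msupp q -> upclosure S m)); apply;
    last by move=> _ [s Ss ->] m /mem_msuppXP <-; exists s => //; exact: lepm_refl.
  split; first by move=> m; rewrite -mpolyC0 msupp0.
  split=> [p1 p2 h1 h2 m /msuppD_le | r q hq m].
    by rewrite mem_cat => /orP [/h1 | /h2].
  move=> /msuppM_le /allpairsP [[m1 m2] [/= _ m2q ->]].
  have [s Ss sm2] := hq _ m2q; exists s => //.
  exact: lepm_trans sm2 (lem_addl _ _).
- move=> pS; rewrite (mpolyE p); apply: ideal_big_sum; first exact: ideal_gen_is_ideal.
  move=> m /pS [s Ss sm].
  rewrite -mul_mpolyC -(submK sm) mpolyXD mulrA.
  by apply: (ideal_gen_is_ideal _).2.2; apply: ideal_gen_sub; exists s.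
Qed.

Lemma ideal_gen_monomialsX (S : mon -> Prop) m :
  ideal_gen (monomials S) 'X_[m] <-> upclosure S m.
Proof.
rewrite ideal_gen_monomialsP; split=> [|Sm m']; first by apply; rewrite msuppX mem_head.
by move/mem_msuppXP <-.
Qed.

Definition exps (A : M) (m : mon) : Prop := sval A 'X_[m].

Lemma MonR_genE (A : M) : exists S, forall p, sval A p <-> ideal_gen (monomials S) p.
Proof.
case: A => P [[S0 [S0mon PE]] _] /=.
exists (fun s => S0 'X_[s]) => p; rewrite PE; split; apply: ideal_gen_mono => q.
- by move=> S0q; have [m qE] := S0mon _ S0q; apply: ideal_gen_sub; exists m; rewrite -?qE.
- by move=> [s S0s ->]; apply: ideal_gen_sub.
Qed.

Lemma MonR_memP (A : M) p : sval A p <-> forall m, m \in msupp p -> exps A m.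
Proof.
have [S AE] := MonR_genE A.
have expsE m : exps A m <-> upclosure S m by rewrite /exps AE ideal_gen_monomialsX.
by rewrite AE ideal_gen_monomialsP; split=> pA m /pA /expsE.
Qed.

Lemma exps_up (A : M) m m' : exps A m -> (m <= m')%MM -> exps A m'.
Proof.
have [S AE] := MonR_genE A.
rewrite /exps !AE !ideal_gen_monomialsX => -[s Ss sm] mm'.
by exists s => //; exact: lepm_trans sm mm'.
Qed.

Lemma exps_nonempty (A : M) : exists m, exps A m.
Proof.
case: A => P [PM [p [Pp p0]]].
have [m pm] : exists m, m \in msupp p.
  case E: (msupp p) => [|m s]; last by exists m; rewrite mem_head.
  by move: p0; rewrite -msupp_eq0 E.
by exists m; apply: (MonR_memP (exist _ P (conj PM (ex_intro _ p (conj Pp p0)))) p).1.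
Qed.

Lemma MonR_ext (A B : M) : (forall m, exps A m <-> exps B m) -> A = B.
Proof.
move=> AB; have E : sval A = sval B.
  apply: functional_extensionality => p; apply: propositional_extensionality.
  by rewrite !MonR_memP; split=> h m /h /AB.
clear AB; case: A B E => [P hP] [Q hQ] /= E; subst Q.
by rewrite (proof_irrelevance _ hP hQ).
Qed.

Lemma to_mon_sval (P : poly -> Prop) : is_MonR P -> sval (to_mon P) = P.
Proof. by rewrite /to_mon; case: excluded_middle_informative. Qed.

Lemma mpolyX_neq0 (m : mon) : 'X_[m] != 0 :> poly.
Proof. by apply/eqP => X0; move: (msuppX K m); rewrite X0 -mpolyC0 msupp0. Qed.

Definition mon_gen (S : mon -> Prop) : M := to_mon (ideal_gen (monomials S)).

Lemma exps_mon_gen (S : mon -> Prop) m :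
  (exists s, S s) -> exps (mon_gen S) m <-> upclosure S m.
Proof.
move=> [s Ss]; rewrite /exps /mon_gen to_mon_sval ?ideal_gen_monomialsX //.
split; first by exists (monomials S); split=> // q [t _ ->]; exists t.
by exists 'X_[s]; split; [apply: ideal_gen_sub; exists s | exact: mpolyX_neq0].
Qed.

Definition upset (U : mon -> Prop) : Prop :=
  (forall m m', U m -> (m <= m')%MM -> U m') /\ exists m, U m.

Lemma exps_mon_gen_upset (U : mon -> Prop) m : upset U -> exps (mon_gen U) m <-> U m.
Proof.
move=> [Uup Une]; rewrite exps_mon_gen //.
by split=> [[s Us sm] | Um]; [exact: Uup Us sm | exists m => //; exact: lepm_refl].
Qed.

Definition sumset (U V : mon -> Prop) (m : mon) : Prop :=
  exists a b, [/\ U a, V b & m = (a + b)%MM].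

Lemma mon_mul_gen (A B : M) : mul A B = mon_gen (sumset (exps A) (exps B)).
Proof.
rewrite /mon_mul /mon_gen; congr to_mon.
apply: functional_extensionality => p; apply: propositional_extensionality; split.
- apply: ideal_gen_mono => _ [f [g [Af [Bg ->]]]].
  apply/ideal_gen_monomialsP => _ /msuppM_le /allpairsP [[a b] [/= fa gb ->]].
  exists (a + b)%MM; last exact: lepm_refl.
  exists a, b; split=> //; first exact: (MonR_memP A f).1 Af a fa.
  exact: (MonR_memP B g).1 Bg b gb.
- apply: ideal_gen_mono => _ [_ [a [b [Aa Bb ->]]] ->].
  by apply: ideal_gen_sub; exists 'X_[a], 'X_[b]; rewrite mpolyXD.
Qed.

Lemma exps_mul (A B : M) m : exps (mul A B) m <-> sumset (exps A) (exps B) m.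
Proof.
have [a Aa] := exps_nonempty A; have [b Bb] := exps_nonempty B.
rewrite mon_mul_gen exps_mon_gen; last by exists (a + b)%MM, a, b.
split=> [[_ [a' [b' [Aa' Bb' ->]]] le] | h]; last by exists m => //; exact: lepm_refl.
exists a', (b' + (m - (a' + b')))%MM; split=> //; first exact: exps_up Bb' (lem_addr _ _).
by rewrite addmA addmC submK.
Qed.

Lemma exps_mul_sub (A B : M) v m :
  (v <= m)%MM -> exps A v -> exps B (m - v)%MM -> exps (mul A B) m.
Proof. by move=> vm Av Bmv; apply/exps_mul; exists v, (m - v)%MM; rewrite addmC submK. Qed.

Lemma mon_mulC (A B : M) : mul A B = mul B A.
Proof.
apply: MonR_ext => m; rewrite !exps_mul.
by split=> -[a [b [Aa Bb ->]]]; exists b, a; rewrite addmC.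
Qed.

Lemma mon_mulA (A B C : M) : mul A (mul B C) = mul (mul A B) C.
Proof.
apply: MonR_ext => m; rewrite !exps_mul; split.
- move=> [a [_ [Aa /exps_mul [b [c [Bb Cc ->]]] ->]]].
  by exists (a + b)%MM, c; rewrite addmA; split=> //; apply/exps_mul; exists a, b.
- move=> [_ [c [/exps_mul [a [b [Aa Bb ->]]] Cc ->]]].
  by exists a, (b + c)%MM; rewrite addmA; split=> //; apply/exps_mul; exists b, c.
Qed.

Lemma mon_mul1m (A : M) : mul one A = A.
Proof.
apply: MonR_ext => m; rewrite exps_mul.
split=> [[a [b [_ Bb ->]]] | Am]; first exact: exps_up Bb (lem_addl _ _).
by exists 0%MM, m; rewrite add0m.
Qed.

Lemma exps0_one (A : M) : exps A 0%MM -> A = one.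
Proof.
move=> A0; apply: MonR_ext => m; split=> // _; apply: exps_up A0 _.
by apply/mnm_lepP => i; rewrite mnm0E.
Qed.

Lemma MonR_unitP (A : M) : is_unit mul one A <-> exps A 0%MM.
Proof.
split=> [[B AB] | A0]; last by exists one; rewrite (exps0_one A0) mon_mul1m.
have : exps (mul A B) 0%MM by rewrite AB.
by case/exps_mul=> a [b [Aa _ /esym/eqP]]; rewrite mnmD_eq0 => /andP [/eqP <-].
Qed.

Lemma MonR_reduced : reduced_cmonoid mul one.
Proof.
split; first by split; [exact: mon_mulA | split; [exact: mon_mulC | exact: mon_mul1m]].
by move=> A /MonR_unitP /exps0_one.
Qed.

Lemma mon_mulm1 (A : M) : mul A one = A.
Proof. by rewrite mon_mulC mon_mul1m. Qed.

Lemma mdeg_exps_gt0 (A : M) m : ~ is_unit mul one A -> exps A m -> (0 < mdeg m)%N.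
Proof.
by move=> nuA Am; rewrite lt0n mdeg_eq0; apply: contraPN Am => /eqP ->; move/MonR_unitP.
Qed.

Lemma size_le_mdeg_exps (s : seq M) m : (forall x, List.In x s -> ~ is_unit mul one x) ->
  exps (mprod mul one s) m -> (size s <= mdeg m)%N.
Proof.
elim: s m => [|x s IH] //= m nus /exps_mul [a [b [xa sb ->]]].
have := mdeg_exps_gt0 (nus x (or_introl erefl)) xa.
have := IH b (fun y ys => nus y (or_intror ys)) sb; rewrite mdegD; lia.
Qed.

Lemma Lset_le_mdeg (A : M) m k : exps A m -> Lset mul one A k -> (k <= mdeg m)%N.
Proof.
move=> Am [s [<- [sA As]]].
by apply: (size_le_mdeg_exps (fun x xs => (sA x xs).1)); rewrite -As.
Qed.

Lemma Lset_exists (A : M) : exists k, Lset mul one A k.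
Proof.
suff IH n : forall (B : M) m, exps B m -> (mdeg m <= n)%N -> exists k, Lset mul one B k.
  by have [m Am] := exps_nonempty A; exact: IH Am (leqnn _).
elim: n => [|n IH] {}A m Am dm.
  have m0 : m = 0%MM by apply/eqP; rewrite -mdeg_eq0; lia.
  by exists 0%N, [::]; rewrite (exps0_one (_ : exps A 0%MM)) -?m0.
have [A0 | nuA] := classic (is_unit mul one A).
  by exists 0%N, [::]; rewrite (MonR_reduced.2 _ A0).
have [aA | naA] := classic (is_atom mul one A).
  by exists 1%N, [:: A]; split=> //; split=> [x [<- | []] | ] //=; rewrite mon_mulm1.
have [B [C [ABC nuB nuC]]] := not_atom_split nuA naA.
move: Am dm; rewrite ABC => /exps_mul [b [c [Bb Cc ->]]]; rewrite mdegD => dm.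
have := mdeg_exps_gt0 nuB Bb; have := mdeg_exps_gt0 nuC Cc => dc db.
have [_ [sb [_ [sbA Bsb]]]] := IH B b Bb ltac:(lia).
have [_ [sc [_ [scA Csc]]]] := IH C c Cc ltac:(lia).
exists (size (sb ++ sc)), (sb ++ sc); split=> //; split.
  by move=> x /In_cat [/sbA | /scA].
by rewrite (mprod_cat MonR_reduced) -Bsb -Csc.
Qed.

Lemma MonR_BF : BF_monoid mul one.
Proof.
move=> A; split; first exact: Lset_exists.
by have [m Am] := exps_nonempty A; exists (mdeg m) => k; apply: Lset_le_mdeg.
Qed.

Lemma atom_of_mdeg1 (A : M) m :
  ~ is_unit mul one A -> exps A m -> mdeg m = 1%N -> is_atom mul one A.
Proof.
move=> nuA Am dm; apply: atomI => // B C ABC nuB nuC.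
move: Am dm; rewrite ABC => /exps_mul [b [c [Bb Cc ->]]]; rewrite mdegD.
have := mdeg_exps_gt0 nuB Bb; have := mdeg_exps_gt0 nuC Cc; lia.
Qed.

End MonomialIdeals.

Section Rationals.
Local Open Scope ring_scope.

Lemma rat_gt1_ratio (q : rat) : 1 < q ->
  exists r s : nat, [/\ (0 < s)%N, (s < r)%N & q = r%:R / s%:R].
Proof.
move=> q1; have q0 : 0 < q by apply: lt_trans q1.
have [r rE] : exists r : nat, numq q = r%:Z.
  by exists `|numq q|%N; rewrite gez0_abs // ltW // numq_gt0.
have [s sE] : exists s : nat, denq q = s%:Z.
  by exists `|denq q|%N; rewrite gez0_abs // ltW.
have qE : q = r%:R / s%:R by rewrite -[q]divq_num_den rE sE.
have s0 : (0 < s)%N by rewrite -ltz_nat -sE.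
exists r, s; split=> //.
by move: q1; rewrite qE ltr_pdivlMr ?ltr0n // mul1r ltr_nat.
Qed.

Lemma rho_of_double (r s : nat) : (0 < s)%N -> rho_of (2 * s) (2 * r) = r%:R / s%:R.
Proof.
move=> s0; rewrite /rho_of ifF; last by apply/eqP; lia.
by rewrite !natrM invfM mulrACA mulfV ?mul1r // pnatr_eq0.
Qed.

End Rationals.

Section TwoVariables.
Variables (K : fieldType) (N : nat).
Hypothesis hN : (2 <= N)%N.
Local Notation mon := 'X_{1..N}.
Local Notation M := (MonR K N).
Local Notation one := (mon_one K N).
Local Notation mul := (@mon_mul K N).
Local Notation unit := (is_unit mul one).
Local Notation atom := (is_atom mul one).

Definition iX : 'I_N := Ordinal (leq_trans (isT : (0 < 2)%N) hN).
Definition iY : 'I_N := Ordinal hN.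

Definition expXY (a b : nat) : mon :=
  [multinom (if i == iX then a else if i == iY then b else 0%N) | i < N].

Lemma expXY_iX a b : expXY a b iX = a. Proof. by rewrite mnmE eqxx. Qed.
Lemma expXY_iY a b : expXY a b iY = b. Proof. by rewrite mnmE. Qed.

Lemma expXY_other a b i : i != iX -> i != iY -> expXY a b i = 0%N.
Proof. by move=> iX' iY'; rewrite mnmE (negbTE iX') (negbTE iY'). Qed.

Lemma expXY_eq (m m' : mon) :
  (forall i, i != iX -> i != iY -> m i = m' i) -> m iX = m' iX -> m iY = m' iY -> m = m'.
Proof.
move=> mo mX mY; apply/mnmP => i.
by case: (eqVneq i iX) => [-> //|iX']; case: (eqVneq i iY) => [-> //|iY']; exact: mo.
Qed.

Lemma expXY00 : expXY 0 0 = 0%MM.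
Proof.
by apply: expXY_eq => [i iX' iY'||]; rewrite ?mnm0E ?expXY_iX ?expXY_iY ?expXY_other.
Qed.

Lemma expXYD a b c d : (expXY a b + expXY c d)%MM = expXY (a + c) (b + d).
Proof.
by apply: expXY_eq => [i iX' iY'||]; rewrite mnmDE ?expXY_iX ?expXY_iY ?expXY_other.
Qed.

Lemma expXYB a b c d : (expXY a b - expXY c d)%MM = expXY (a - c) (b - d).
Proof.
by apply: expXY_eq => [i iX' iY'||]; rewrite mnmBE ?expXY_iX ?expXY_iY ?expXY_other.
Qed.

Lemma mdeg_expXY a b : mdeg (expXY a b) = (a + b)%N.
Proof.
rewrite mdegE (bigD1 iX) //= (bigD1 iY) //= big1 ?expXY_iX ?expXY_iY ?addn0 //.
by move=> i /andP [iY' iX']; rewrite expXY_other.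
Qed.

Lemma lem_expXY a b (m : mon) : (expXY a b <= m)%MM = (a <= m iX)%N && (b <= m iY)%N.
Proof.
apply/mnm_lepP/andP => [le | [aX bY] i].
  by have := le iX; have := le iY; rewrite expXY_iX expXY_iY => -> ->.
case: (eqVneq i iX) => [-> | iX']; first by rewrite expXY_iX.
case: (eqVneq i iY) => [-> | iY']; first by rewrite expXY_iY.
by rewrite expXY_other.
Qed.

Lemma addm_eq_expXY (b c : mon) x y : (b + c)%MM = expXY x y ->
  b = expXY (b iX) (b iY) /\ c = expXY (c iX) (c iY).
Proof.
move=> bc; have bcE i : (b i + c i = expXY x y i)%N by rewrite -bc mnmDE.
by split; apply: expXY_eq => [i iX' iY'||]; rewrite ?expXY_iX ?expXY_iY //;
  have := bcE i; rewrite !expXY_other //; lia.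
Qed.

Lemma exps_mul_expXY (B C : M) x y : ~ unit B -> ~ unit C ->
  exps (mul B C) (expXY x y) ->
  exists a1 b1 a2 b2, [/\ exps B (expXY a1 b1), exps C (expXY a2 b2),
    a1 + a2 = x, b1 + b2 = y & (0 < a1 + b1) && (0 < a2 + b2)]%N.
Proof.
move=> nuB nuC /exps_mul [b [c [Bb Cc bc]]].
have [bE cE] := addm_eq_expXY (esym bc).
have bcE i : (b i + c i = expXY x y i)%N by rewrite bc mnmDE.
exists (b iX), (b iY), (c iX), (c iY); rewrite -bE -cE; split=> //.
- by rewrite bcE expXY_iX.
- by rewrite bcE expXY_iY.
- by rewrite -!mdeg_expXY -bE -cE (mdeg_exps_gt0 nuB Bb) (mdeg_exps_gt0 nuC Cc).
Qed.

Lemma exps_mul_expXY_add (B C : M) a1 b1 a2 b2 :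
  exps B (expXY a1 b1) -> exps C (expXY a2 b2) ->
  exps (mul B C) (expXY (a1 + a2) (b1 + b2)).
Proof.
by move=> Bb Cc; apply/exps_mul; exists (expXY a1 b1), (expXY a2 b2); rewrite expXYD.
Qed.

Definition idealXY (P : nat -> nat -> Prop) : M := @mon_gen K N (fun m => P (m iX) (m iY)).

Lemma exps_idealXY (P : nat -> nat -> Prop) m :
  (forall a b a' b', P a b -> (a <= a')%N -> (b <= b')%N -> P a' b') ->
  (exists a b, P a b) -> exps (idealXY P) m <-> P (m iX) (m iY).
Proof.
move=> Pup [a [b Pab]]; apply: exps_mon_gen_upset.
split=> [m1 m2 P1 /mnm_lepP le | ]; first exact: Pup P1 (le iX) (le iY).
by exists (expXY a b); rewrite expXY_iX expXY_iY.
Qed.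

Definition powXY k := idealXY (fun a b => k <= a + b)%N.

Lemma exps_powXY k m : exps (powXY k) m <-> (k <= m iX + m iY)%N.
Proof. by apply: exps_idealXY => [*|]; [lia | exists k, 0%N; lia]. Qed.

Lemma powXYD a b : mul (powXY a) (powXY b) = powXY (a + b).
Proof.
apply: MonR_ext => m; rewrite exps_powXY; split.
  by case/exps_mul=> [x [y [/exps_powXY hx /exps_powXY hy ->]]]; rewrite !mnmDE; lia.
move=> abm; set t := minn (m iX) a.
have le : (expXY t (a - t) <= m)%MM by rewrite lem_expXY /t; lia.
by apply: (exps_mul_sub le); apply/exps_powXY; rewrite ?mnmBE expXY_iX expXY_iY /t; lia.
Qed.

Lemma powXY0 : powXY 0 = one.
Proof. by apply: MonR_ext => m; rewrite exps_powXY. Qed.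

Lemma mpow_powXY1 j : mpow mul one (powXY 1) j = powXY j.
Proof.
elim: j => [|j IH]; first by rewrite powXY0.
by rewrite /mpow iterS -/(mpow mul one (powXY 1) j) IH powXYD add1n.
Qed.

Lemma a_k_powXY k : a_k K N k = powXY k.
Proof.
rewrite /a_k -mpow_powXY1 /ideal_XY; congr mpow.
pose S (s : mon) := exists2 i : 'I_N, (val i < 2)%N & s = U_(i)%MM.
have -> : (fun p : {mpoly K[N]} => exists i : 'I_N, (val i < 2)%N /\ p = 'X_i)
    = monomials S.
  apply: functional_extensionality => p; apply: propositional_extensionality.
  by split=> [[i [i2 ->]] | [_ [i i2 ->] ->]]; [exists U_(i)%MM => //; exists i | exists i].
rewrite -/(mon_gen K S); apply: MonR_ext => m.
rewrite exps_powXY exps_mon_gen; last by exists U_(iX)%MM, iX.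
split=> [[_ [i i2 ->]] | m1].
  have [-> | ->] : i = iX \/ i = iY.
    by case: i i2 => [[|[|j]] ?] // _; [left | right]; exact: val_inj.
  1,2: by rewrite lep1mP; lia.
have [j j2 mj] : exists2 j : 'I_N, (val j < 2)%N & (m j != 0)%N.
  by case: (posnP (m iX)) => hX; [exists iY | exists iX] => //; lia.
by exists U_(j)%MM; [exists j | rewrite lep1mP].
Qed.

Definition idealXnYn n := idealXY (fun a b => n <= a \/ n <= b)%N.

Lemma exps_idealXnYn n m : exps (idealXnYn n) m <-> (n <= m iX \/ n <= m iY)%N.
Proof. by apply: exps_idealXY => [*|]; [lia | exists n, 0%N; lia]. Qed.

Lemma idealXnYn_mul_powXY n : mul (idealXnYn n.+1) (powXY n) = powXY (n + n.+1).
Proof.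
apply: MonR_ext => m; rewrite exps_powXY; split.
  by case/exps_mul=> [x [y [/exps_idealXnYn hx /exps_powXY hy ->]]]; rewrite !mnmDE; lia.
move=> hm; have [v [vm vn rest]] : exists v, [/\ (v <= m)%MM,
    n.+1 <= v iX \/ n.+1 <= v iY & n <= m iX - v iX + (m iY - v iY)]%N.
  case: (leqP n.+1 (m iX)) => hX; [exists (expXY n.+1 0) | exists (expXY 0 n.+1)];
    rewrite lem_expXY expXY_iX expXY_iY; split; lia.
by apply: (exps_mul_sub vm); [apply/exps_idealXnYn | apply/exps_powXY; rewrite !mnmBE].
Qed.

Lemma atom_idealXnYn n : (0 < n)%N -> atom (idealXnYn n).
Proof.
move=> n0; apply: atomI => [/MonR_unitP/exps_idealXnYn | B C BC nuB nuC].
  by rewrite !mnm0E; lia.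
have inBC a b : exps (mul B C) (expXY a b) <-> (n <= a \/ n <= b)%N.
  by rewrite -BC exps_idealXnYn expXY_iX expXY_iY.
have [a1 [b1 [a2 [b2 [B1 _ ea1 eb1 /andP [p1 p2]]]]]] :=
  exps_mul_expXY nuB nuC (proj2 (inBC n 0%N) (or_introl (leqnn n))).
have [a3 [b3 [a4 [b4 [_ C4 ea3 eb3 /andP [p3 p4]]]]]] :=
  exps_mul_expXY nuB nuC (proj2 (inBC 0%N n) (or_intror (leqnn n))).
have := (inBC _ _).1 (exps_mul_expXY_add B1 C4); lia.
Qed.

(* The generator X Y^(d-1) keeps D_d, for even d >= 4, from being <X^2, Y^2> D_(d-2). *)
Definition admissible (d i : nat) : Prop :=
  (i <= d /\ (i = 0 \/ i = 1 /\ d <> 2 \/ i %% 2 = d %% 2))%N.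

Definition idealD d :=
  idealXY (fun a b => exists2 i, admissible d i & i <= a /\ d - i <= b)%N.

Lemma exps_idealD d m :
  exps (idealD d) m <-> exists2 i, admissible d i & (i <= m iX /\ d - i <= m iY)%N.
Proof.
apply: exps_idealXY => [a b a' b' [i id [ia ib]] aa' bb' | ]; first by exists i => //; lia.
by exists 0%N, d, 0%N; rewrite /admissible; lia.
Qed.

Lemma powXY1_mul_idealD d : mul (powXY 1) (idealD d) = powXY d.+1.
Proof.
apply: MonR_ext => m; rewrite exps_powXY; split.
  case/exps_mul=> [x [y [/exps_powXY hx /exps_idealD [i [id _] [ix iy]] ->]]].
  by rewrite !mnmDE; lia.
move=> hm; have [i id [ix iy]] : exists2 i, admissible d i & (i <= m iX /\ d - i <= m iY)%N.
  set t := minn (m iX) d.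
  have [td | ntd] := classic (admissible d t); first by exists t => //; rewrite /t; lia.
  by exists t.-1; move: ntd; rewrite /admissible /t; lia.
have le : (expXY i (d - i) <= m)%MM by rewrite lem_expXY; lia.
rewrite mon_mulC; apply: (exps_mul_sub le).
  by apply/exps_idealD; exists i => //; rewrite expXY_iX expXY_iY.
by apply/exps_powXY; rewrite !mnmBE expXY_iX expXY_iY; case: id; lia.
Qed.

(* Recombining crosswise the factors of Y^d, X^d and X Y^(d-1) in a splitting
   of D_d produces exponents of degree exactly d whose X-degrees cannot all be
   admissible. *)
Lemma atom_idealD d : (0 < d)%N -> atom (idealD d).
Proof.
move=> d0; apply: atomI => [/MonR_unitP/exps_idealD [i _] | B C BC nuB nuC].
  by rewrite !mnm0E; lia.
have inBC a b : exps (mul B C) (expXY a b) ->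
    exists2 i, admissible d i & (i <= a /\ d - i <= b)%N.
  by rewrite -BC exps_idealD expXY_iX expXY_iY.
have deg_ge a b : exps (mul B C) (expXY a b) -> (d <= a + b)%N.
  by case/inBC=> i [id _] ?; lia.
have deg_eq a b : exps (mul B C) (expXY a b) -> (a + b = d)%N -> admissible d a.
  by case/inBC=> i [id iad] ? abd; have -> : a = i by lia.
have gen i : admissible d i -> exps (mul B C) (expXY i (d - i)).
  by move=> id; rewrite -BC exps_idealD expXY_iX expXY_iY; exists i.
have [a1 [b1 [a2 [b2 [B1 C1 ea1 eb1 /andP [p1 p2]]]]]] :=
  exps_mul_expXY nuB nuC (gen 0%N ltac:(rewrite /admissible; lia)).
have [a3 [b3 [a4 [b4 [B3 C3 ea3 eb3 /andP [p3 p4]]]]]] :=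
  exps_mul_expXY nuB nuC (gen d ltac:(rewrite /admissible; lia)).
have X13 := exps_mul_expXY_add B1 C3; have X31 := exps_mul_expXY_add B3 C1.
have := deg_ge _ _ X13; have := deg_ge _ _ X31 => g31 g13.
have q13 := deg_eq _ _ X13 ltac:(lia); have q31 := deg_eq _ _ X31 ltac:(lia).
have [d2 | dn2] := eqVneq d 2; first by subst d; rewrite /admissible in q13 q31; lia.
have [a5 [b5 [a6 [b6 [B5 C5 ea5 eb5 /andP [p5 p6]]]]]] :=
  exps_mul_expXY nuB nuC (gen 1%N ltac:(rewrite /admissible; lia)).
have X53 := exps_mul_expXY_add B5 C3; have X16 := exps_mul_expXY_add B1 C5.
have X36 := exps_mul_expXY_add B3 C5; have X51 := exps_mul_expXY_add B5 C1.
have := deg_ge _ _ X53; have := deg_ge _ _ X16; have := deg_ge _ _ X36;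
  have := deg_ge _ _ X51 => g51 g36 g16 g53.
case: (eqVneq a5 1) => a51.
- by have := deg_eq _ _ X53 ltac:(lia); rewrite /admissible in q13 q31 *; lia.
- by have := deg_eq _ _ X36 ltac:(lia); rewrite /admissible in q13 q31 *; lia.
Qed.

Lemma atom_powXY1 : atom (powXY 1).
Proof.
apply: (@atom_of_mdeg1 _ _ _ (expXY 1 0)); last exact: mdeg_expXY.
  by move/MonR_unitP/exps_powXY; rewrite !mnm0E.
by apply/exps_powXY; rewrite expXY_iX expXY_iY.
Qed.

Lemma Lset_powXY k m : (2 <= m <= k)%N -> Lset mul one (powXY k) m.
Proof.
move=> /andP [m2 mk].
exists ([:: powXY 1; idealD (k - m + 1)] ++ nseq (m - 2) (powXY 1)).
split; first by rewrite size_cat size_nseq /=; lia.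
split=> [x /In_cat [[<- | [<- | []]] | xs] | ].
- exact: atom_powXY1.
- by apply: atom_idealD; lia.
- by rewrite (In_nseq xs); exact: atom_powXY1.
rewrite (mprod_cat (MonR_reduced K N)) mprod_nseq mpow_powXY1 /= mon_mulm1.
by rewrite powXY1_mul_idealD powXYD; congr powXY; lia.
Qed.

Lemma Lset_a_k k m : (2 <= k)%N -> Lset mul one (a_k K N k) m <-> (2 <= m <= k)%N.
Proof.
move=> k2; rewrite a_k_powXY; split=> [Lm | ]; last exact: Lset_powXY.
have Lk : Lset mul one (powXY k) k by apply: Lset_powXY; rewrite k2 leqnn.
have Xk : exps (powXY k) (expXY k 0) by apply/exps_powXY; rewrite expXY_iX expXY_iY addn0.
rewrite (Lset_ge2 (MonR_reduced K N) Lk k2 Lm) /=.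
by apply: leq_trans (Lset_le_mdeg Xk Lm) _; rewrite mdeg_expXY addn0.
Qed.

Lemma Uset_MonR k m : (2 <= k)%N -> Uset mul one k m <-> (2 <= m)%N.
Proof.
move=> k2; split=> [[A [Lk Lm]] | m2].
  exact: (Lset_ge2 (MonR_reduced K N) Lk k2 Lm).
by exists (powXY (maxn k m)); split; apply: Lset_powXY; rewrite ?k2 ?m2 ?leq_maxl ?leq_maxr.
Qed.

Lemma MonR_not_transfer_Krull : ~ transfer_Krull mul one.
Proof.
move=> TKr; have TK := transfer_Krull_atom_cancel TKr.
have E : mul (powXY 1) (idealXnYn 2) = mul (powXY 1) (mul (powXY 1) (powXY 1)).
  by rewrite mon_mulC (idealXnYn_mul_powXY 1) !powXYD.
have [nu _] := atom_powXY1.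
by case: (TK _ _ _ _ E (atom_idealXnYn (isT : 0 < 2)%N)) => /nu.
Qed.

Lemma MonR_not_loc_fin_gen : ~ loc_fin_gen mul one.
Proof.
move=> /(_ (powXY 1)).
apply: (infinitely_many_atoms_not_fin_gen (MonR_reduced K N)
          (f := fun n => idealXnYn n.+1)).
  have inA j : exps (idealXnYn j.+1) (expXY j.+1 0).
    by apply/exps_idealXnYn; rewrite expXY_iX; left.
  have leA j l : exps (idealXnYn j.+1) (expXY l.+1 0) -> (j <= l)%N.
    by move/exps_idealXnYn; rewrite expXY_iX expXY_iY; lia.
  move=> a b /= ab; have := inA a; have := inA b.
  by rewrite -{1}ab => /leA ab'; rewrite ab => /leA ba; lia.
move=> n; split; last exact: atom_idealXnYn.
apply: (@dc_gen_dvd_pow _ _ _ _ _ (n + n.+1)); exists (powXY n).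
by rewrite mpow_powXY1 idealXnYn_mul_powXY.
Qed.

Definition idealX := idealXY (fun a _ => 0 < a)%N.

Lemma exps_idealX m : exps idealX m <-> (0 < m iX)%N.
Proof. by apply: exps_idealXY => [*|]; [lia | exists 1%N, 0%N]. Qed.

Lemma atom_idealX : atom idealX.
Proof.
apply: (@atom_of_mdeg1 _ _ _ (expXY 1 0)); last exact: mdeg_expXY.
  by move/MonR_unitP/exps_idealX; rewrite mnm0E.
by apply/exps_idealX; rewrite expXY_iX.
Qed.

Lemma exps_idealX_mul (A : M) m :
  exps (mul idealX A) m <-> (0 < m iX)%N /\ exps A (m - expXY 1 0)%MM.
Proof.
split=> [/exps_mul [x [y [/exps_idealX x0 Ay ->]]] | [m0 Am]].
  split; first by rewrite mnmDE; lia.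
  have /mnm_lepP x1 : (expXY 1 0 <= x)%MM by rewrite lem_expXY x0.
  by apply: exps_up Ay _; apply/mnm_lepP => i; rewrite mnmBE mnmDE; have := x1 i; lia.
apply: exps_mul_sub Am; first by rewrite lem_expXY m0.
by apply/exps_idealX; rewrite expXY_iX.
Qed.

Lemma exps_iter_idealX j (A : M) m :
  exps (iter j (mul idealX) A) m <-> (j <= m iX)%N /\ exps A (m - expXY j 0)%MM.
Proof.
elim: j m => [|j IH] m; first by rewrite /= expXY00 subm0; split=> [|[]].
rewrite iterS exps_idealX_mul IH submDA expXYD mnmBE expXY_iX add1n.
by split=> [[m0 [jm Am]] | [jm Am]]; do ?split=> //; lia.
Qed.

Lemma idealX_mul_inj (A B : M) : mul idealX A = mul idealX B -> A = B.
Proof.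
move=> AB; apply: MonR_ext => m.
have shift (C : M) : exps C m <-> exps (mul idealX C) (m + expXY 1 0)%MM.
  by rewrite exps_idealX_mul addmK mnmDE expXY_iX; split=> [|[]] //; split=> //; lia.
by rewrite !shift AB.
Qed.

(* Such an A factors as <X> times the ideal of the m with X^m X in A. *)
Lemma atom_eq_idealX (A : M) :
  atom A -> (forall m, exps A m -> 0 < m iX)%N -> A = idealX.
Proof.
move=> [_ aA] A0.
have XA m : exps A m -> (expXY 1 0 <= m)%MM by move/A0; rewrite lem_expXY => ->.
pose U (m : mon) := exps A (m + expXY 1 0)%MM.
have Uup : upset U.
  split=> [m1 m2 U1 /mnm_lepP le | ].
    by apply: exps_up U1 _; apply/mnm_lepP => i; rewrite !mnmDE leq_add2r.
  by have [m Am] := exps_nonempty A; exists (m - expXY 1 0)%MM; rewrite /U submK ?XA.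
have AE : A = mul idealX (mon_gen K U).
  apply: MonR_ext => m; rewrite exps_idealX_mul exps_mon_gen_upset // /U.
  split=> [Am | [m0]]; last by rewrite submK // lem_expXY m0.
  by split; [exact: A0 | rewrite submK ?XA].
case: (aA _ _ AE) => /MonR_unitP; first by move/exps_idealX; rewrite mnm0E.
by move/exps0_one => U1; rewrite AE U1 mon_mulm1.
Qed.

Lemma exps_mprod_X0 (s : seq M) :
  (forall u, List.In u s -> exists2 m, exps u m & m iX = 0%N) ->
  exists2 m, exps (mprod mul one s) m & m iX = 0%N.
Proof.
elim: s => [|u s IH] hs; first by exists 0%MM; rewrite ?mnm0E.
have [a ua a0] := hs u (or_introl erefl).
have [b sb b0] := IH (fun v vs => hs v (or_intror vs)).
by exists (a + b)%MM; [apply/exps_mul; exists a, b | rewrite mnmDE a0 b0].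
Qed.

(* Every exponent of X^j M_k has positive X-degree, so some atomic factor has
   only such exponents and is therefore <X>, which can be cancelled. *)
Lemma Lset_iter_idealX_ge k j (s : seq M) : (2 <= k)%N ->
  (forall x, List.In x s -> atom x) ->
  mprod mul one s = iter j (mul idealX) (powXY k) -> (j + 2 <= size s)%N.
Proof.
move=> k2; elim: j s => [|j IH] s sA sE.
  have Lk : Lset mul one (powXY k) k by apply: Lset_powXY; rewrite k2 leqnn.
  by apply: (Lset_ge2 (MonR_reduced K N) Lk k2); exists s.
have [u us uX] : exists2 u, List.In u s & forall m, exps u m -> (0 < m iX)%N.
  apply: NNPP => noX.
  have [m sm m0] : exists2 m, exps (mprod mul one s) m & m iX = 0%N.
    apply: exps_mprod_X0 => u us; apply: NNPP => nm; apply: noX; exists u => // m um.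
    by rewrite lt0n; apply/eqP => m0; apply: nm; exists m.
  by move: sm; rewrite sE iterS exps_idealX_mul m0 => -[].
have uE := atom_eq_idealX (sA u us) uX; subst u.
have [s1 [s2 ?]] := List.in_split _ _ us; subst s.
move: sE; rewrite (mprod_insert (MonR_reduced K N)) iterS => /idealX_mul_inj sE.
have sA' x : List.In x (s1 ++ s2) -> atom x.
  by move/In_cat => xs; apply/sA/In_cat; case: xs; [left | right; right].
by have := IH _ sA' sE; rewrite !size_cat /=; lia.
Qed.

Lemma Lset_iter_idealX j (A : M) l :
  Lset mul one A l -> Lset mul one (iter j (mul idealX) A) (j + l).
Proof.
move=> [t [<- [tA At]]]; exists (nseq j idealX ++ t).
split; first by rewrite size_cat size_nseq.
split=> [x /In_cat [xs | /tA] // | ]; first by rewrite (In_nseq xs); exact: atom_idealX.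
by rewrite (mprod_cat (MonR_reduced K N)) mprod_nseq -At (iter_op_mpow (MonR_reduced K N)).
Qed.

Lemma rhoL_iter_idealX k j : (2 <= k)%N ->
  rhoL mul one (iter j (mul idealX) (powXY k)) (rho_of (j + 2) (j + k)).
Proof.
move=> k2; have Lk m : (2 <= m <= k)%N -> Lset mul one (powXY k) m by exact: Lset_powXY.
exists (j + 2)%N, (j + k)%N.
split; first by apply/Lset_iter_idealX/Lk; rewrite leqnn k2.
split; first by move=> l [s [<- [sA sE]]]; exact: Lset_iter_idealX_ge k2 sA (esym sE).
split; first by apply/Lset_iter_idealX/Lk; rewrite leqnn k2.
have Xjk : exps (iter j (mul idealX) (powXY k)) (expXY (j + k) 0).
  apply/exps_iter_idealX; split; first by rewrite expXY_iX; lia.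
  by apply/exps_powXY; rewrite expXYB expXY_iX expXY_iY; lia.
by split=> // l /(Lset_le_mdeg Xjk); rewrite mdeg_expXY addn0.
Qed.

Lemma MonR_fully_elastic : fully_elastic mul one.
Proof.
move=> q q1 _; have [r [s [s0 sr ->]]] := rat_gt1_ratio q1.
(* r / s = (j + k) / (j + 2) for j = 2s - 2 and k = 2r - 2s + 2. *)
exists (iter (2 * s - 2) (mul idealX) (powXY (2 * r - 2 * s + 2))).
have := @rhoL_iter_idealX (2 * r - 2 * s + 2) (2 * s - 2) ltac:(lia).
have -> : (2 * s - 2 + 2 = 2 * s)%N by lia.
have -> : (2 * s - 2 + (2 * r - 2 * s + 2) = 2 * r)%N by lia.
by rewrite rho_of_double.
Qed.

End TwoVariables.

Theorem theorem4p5 (K : fieldType) (N : nat) (hN : (2 <= N)%N) :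
  BF_monoid (@mon_mul K N) (mon_one K N) /\
  (~ loc_fin_gen (@mon_mul K N) (mon_one K N) /\
   ~ transfer_Krull (@mon_mul K N) (mon_one K N)) /\
  (forall k : nat, (2 <= k)%N ->
     forall m : nat, Uset (@mon_mul K N) (mon_one K N) k m <-> (2 <= m)%N) /\
  (forall k : nat, (2 <= k)%N ->
     forall m : nat, Lset (@mon_mul K N) (mon_one K N) (a_k K N k) m <-> (2 <= m <= k)%N) /\
  fully_elastic (@mon_mul K N) (mon_one K N).
Proof.
split; first exact: MonR_BF.
split; first by split; [exact: MonR_not_loc_fin_gen hN | exact: MonR_not_transfer_Krull hN].
split; first by move=> k k2 m; exact: (Uset_MonR K hN m k2).
split; first by move=> k k2 m; exact: (Lset_a_k K hN m k2).
exact: MonR_fully_elastic hN.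
Qed.
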